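(* Let $n\ge 1$ and let $G$ be a subgraph of the complete bipartite graph $K_{n,n}$. Then $G$ can be embedded in any projective plane of order at least $n$.
   Context: A finite projective plane of order $q$ has $q^2+q+1$ points and lines, $q+1$ points on each line and $q+1$ lines through each point; any two distinct points lie on a unique line and any two lines meet in a unique point. An embedding of a simple graph $G=(V,E)$ into a projective plane is an injective map $\phi$ from $V$ to the points such that the induced map sending an edge $ab$ to the line through $\phi(a),\phi(b)$ is injective on $E$. *)

From mathcomp Require Import all_boot.
Set Implicit Arguments. Unset Strict Implicit. Unset Printing Implicit Defensive.

Definition projective_plane (q : nat) (P L : finType) (inc : P -> L -> bool) : Prop :=
  [/\ #|P| = q ^ 2 + q + 1 /\ #|L| = q ^ 2 + q + 1,
      (forall l : L, #|[set p | inc p l]| = q.+1),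
      (forall p : P, #|[set l | inc p l]| = q.+1),
      (forall p1 p2 : P, p1 != p2 ->
          exists! l : L, inc p1 l && inc p2 l) &
      (forall l1 l2 : L, l1 != l2 ->
          exists! p : P, inc p l1 && inc p l2)].

(* The line through two points (well defined for distinct points in a plane). *)
Definition line_through (P L : finType) (inc : P -> L -> bool) (p1 p2 : P)
  : option L := [pick l | inc p1 l && inc p2 l].

Definition simple_graph (V : finType) (e : rel V) : Prop :=
  symmetric e /\ irreflexive e.

Definition side (n : nat) (x : 'I_n + 'I_n) : bool :=
  if x is inl _ then true else false.

Definition subgraph_Knn (n : nat) (V : finType) (e : rel V) : Prop :=
  exists f : V -> 'I_n + 'I_n, injective f /\
    (forall a b, e a b -> side (f a) != side (f b)).

Definition embedding (V : finType) (e : rel V) (P L : finType)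
  (inc : P -> L -> bool) (phi : V -> P) : Prop :=
  injective phi /\
  (forall a b c d, e a b -> e c d ->
     line_through inc (phi a) (phi b) = line_through inc (phi c) (phi d) ->
     (a = c /\ b = d) \/ (a = d /\ b = c)).

From mathcomp Require Import all_boot zify.

Set Implicit Arguments.
Unset Strict Implicit.
Unset Printing Implicit Defensive.

(* Take two lines l1, l2 meeting in a point O; each carries q >= n points
   besides O.  Put one side of the bipartite graph on l1 \ O and the other on
   l2 \ O.  The line of an edge is then neither l1 nor l2, so it meets each of
   them in a single point, and these two points are the endpoints of the edge:
   distinct edges span distinct lines. *)

Lemma ord_inj_into_set (T : finType) (S : {set T}) (n : nat) :
  n <= #|S| -> exists g : 'I_n -> T, injective g /\ forall i, g i \in S.
Proof.
move=> le_n_S; exists (fun i => enum_val (widen_ord le_n_S i)); split.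
- by move=> i j Eij; apply/val_inj/(congr1 val (enum_val_inj Eij)).
- by move=> i; apply: enum_valP.
Qed.

Lemma sum_rect_inj (A B T : Type) (g1 : A -> T) (g2 : B -> T) :
  injective g1 -> injective g2 -> (forall i j, g1 i <> g2 j) ->
  injective (fun x => match x with inl i => g1 i | inr j => g2 j end).
Proof.
move=> g1_inj g2_inj g12 [i|i] [j|j] //= Eij.
- by rewrite (g1_inj _ _ Eij).
- by case: (g12 _ _ Eij).
- by case: (g12 _ _ (esym Eij)).
- by rewrite (g2_inj _ _ Eij).
Qed.

Section ProjectivePlane.

Variables (P L : finType) (inc : P -> L -> bool).
Hypothesis join_exists :
  forall p1 p2 : P, p1 != p2 -> exists! l : L, inc p1 l && inc p2 l.
Hypothesis meet_unique :
  forall l1 l2 : L, l1 != l2 -> exists! p : P, inc p l1 && inc p l2.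

Lemma line_through_sym (p1 p2 : P) :
  line_through inc p1 p2 = line_through inc p2 p1.
Proof. by apply: eq_pick => l; rewrite andbC. Qed.

Lemma line_throughP (p1 p2 : P) (m : L) :
  inc p1 m -> inc p2 m ->
  exists2 l, line_through inc p1 p2 = Some l & inc p1 l && inc p2 l.
Proof.
move=> p1m p2m; rewrite /line_through.
case: pickP => [l p12l|none]; first by exists l.
by move: (none m); rewrite p1m p2m.
Qed.

Definition punctured (l : L) (O : P) : {set P} := [set p | inc p l] :\ O.

Lemma card_punctured (q : nat) (l : L) (O : P) :
  #|[set p | inc p l]| = q.+1 -> inc O l -> #|punctured l O| = q.
Proof.
move=> card_l Ol; have := cardsD1 O [set p | inc p l].
by rewrite card_l inE Ol add1n => -[].
Qed.

Lemma eq_on_two_lines (l m : L) (x y : P) :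
  l != m -> inc x l -> inc x m -> inc y l -> inc y m -> x = y.
Proof.
move=> lm xl xm yl ym; have [p [_ p_uniq]] := meet_unique lm.
by rewrite -(p_uniq x) ?xl ?xm // (p_uniq y) ?yl ?ym.
Qed.

Lemma punctured_disjoint (l1 l2 : L) (O : P) (x : P) :
  l1 != l2 -> inc O l1 -> inc O l2 ->
  x \in punctured l1 O -> x \in punctured l2 O -> False.
Proof.
move=> l12 O_l1 O_l2; rewrite !inE => /andP [xO xl1] /andP [_ xl2].
by move/eqP: xO; apply; apply: eq_on_two_lines l12 _ _ O_l1 O_l2.
Qed.

Lemma transversal_eq (l1 l2 m : L) (O x x' y : P) :
  l1 != l2 -> inc O l1 -> inc O l2 ->
  x \in punctured l1 O -> x' \in punctured l1 O -> y \in punctured l2 O ->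
  inc x m -> inc x' m -> inc y m -> x = x'.
Proof.
move=> l12 O_l1 O_l2 x1 x'1 y2 xm x'm ym.
apply: (@eq_on_two_lines l1 m) xm _ x'm.
- apply/eqP => l1m; apply: (punctured_disjoint l12 O_l1 O_l2 _ y2).
  by move: y2; rewrite /punctured !inE l1m ym => /andP [->].
- by move: x1; rewrite /punctured !inE => /andP [].
- by move: x'1; rewrite /punctured !inE => /andP [].
Qed.

Variables (l1 l2 : L) (O : P).
Hypotheses (l12 : l1 != l2) (O_l1 : inc O l1) (O_l2 : inc O l2).

Lemma crossing_line_inj (x y x' y' : P) :
  x \in punctured l1 O -> y \in punctured l2 O ->
  x' \in punctured l1 O -> y' \in punctured l2 O ->
  line_through inc x y = line_through inc x' y' -> x = x' /\ y = y'.
Proof.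
move=> x1 y2 x'1 y'2.
have l21 : l2 != l1 by rewrite eq_sym.
have line_of u v : u \in punctured l1 O -> v \in punctured l2 O ->
    exists2 m, line_through inc u v = Some m & inc u m && inc v m.
  move=> u1 v2; have uv : u != v.
    by apply/eqP => uv; subst v; apply: (punctured_disjoint l12 O_l1 O_l2 u1).
  by have [m [/andP [um vm] _]] := join_exists uv; apply: line_throughP um vm.
have [m -> /andP [xm ym]] := line_of _ _ x1 y2.
have [m' -> /andP [x'm y'm]] := line_of _ _ x'1 y'2 => -[Em]; subst m'.
split.
- exact: (transversal_eq l12 O_l1 O_l2 x1 x'1 y2 xm x'm ym).
- exact: (transversal_eq l21 O_l2 O_l1 y2 y'2 x1 ym y'm xm).
Qed.

Lemma bipartite_embedding (V : finType) (e : rel V) (s : V -> bool)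
    (phi : V -> P) :
  symmetric e -> (forall a b, e a b -> s a != s b) -> injective phi ->
  (forall v, phi v \in punctured (if s v then l1 else l2) O) ->
  embedding e inc phi.
Proof.
move=> e_sym e_cross phi_inj phi_on; split=> // a b c d eab ecd.
have side_swap u v : e u v -> ~~ s u -> s v.
  by move=> euv; move: (e_cross _ _ euv); case: (s u); case: (s v).
wlog sa : a b eab / s a.
  move=> oriented; case sa: (s a); first exact: oriented.
  rewrite line_through_sym => /(oriented b a); rewrite e_sym.
  by case/(_ eab (side_swap _ _ eab (negbT sa))) => -[-> ->]; [right | left].
wlog sc : c d ecd / s c.
  move=> oriented; case sc: (s c); first exact: oriented.
  rewrite [line_through _ (phi c) _]line_through_sym => /(oriented d c).
  rewrite e_sym.
  by case/(_ ecd (side_swap _ _ ecd (negbT sc))) => -[-> ->]; [right | left].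
have sb : s b = false by move: (e_cross _ _ eab); rewrite sa; case: (s b).
have sd : s d = false by move: (e_cross _ _ ecd); rewrite sc; case: (s d).
have := phi_on a; have := phi_on b; have := phi_on c; have := phi_on d.
rewrite sa sb sc sd => d2 c1 b2 a1 /(crossing_line_inj a1 b2 c1 d2) [Eac Ebd].
by left; split; apply: phi_inj.
Qed.

End ProjectivePlane.

Theorem theorem3p1 (n : nat) (hn : 1 <= n) (V : finType) (e : rel V)
  (hG : simple_graph e) (hsub : subgraph_Knn n e)
  (q : nat) (hq : n <= q) (P L : finType) (inc : P -> L -> bool)
  (hPP : projective_plane q inc) :
  exists phi : V -> P, embedding e inc phi.
Proof.
case: hPP => [[_ card_L] card_line _ join_exists meet_unique].
case: hG => e_sym _; case: hsub => f [f_inj f_cross].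
have /card_gt1P [l1 [l2 [_ _ l12]]] : 1 < #|L| by rewrite card_L; lia.
have [O [/andP [O_l1 O_l2] _]] := meet_unique _ _ l12.
have room l : inc O l -> n <= #|punctured inc l O|.
  by move=> Ol; rewrite (card_punctured (card_line l) Ol).
have [g1 [g1_inj g1_on]] := ord_inj_into_set (room _ O_l1).
have [g2 [g2_inj g2_on]] := ord_inj_into_set (room _ O_l2).
pose g x := match x with inl i => g1 i | inr j => g2 j end.
exists (g \o f).
apply: (bipartite_embedding join_exists meet_unique l12 O_l1 O_l2 e_sym f_cross).
- apply: inj_comp f_inj; apply: sum_rect_inj => // i j E.
  by apply: (punctured_disjoint meet_unique l12 O_l1 O_l2 (g1_on i)); rewrite E.
- by move=> v /=; case: (f v).
Qed.
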